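(* Let $A$ be an $F_n$-good $n\times n$ matrix. If $A_{1,1}=1$, then $A_i=\vec{e}_i$ for all $2\leq i\leq n-1$. If $A_{1,n}=1$, then $A_i=\vec{e}_{n-i+1}$ for all $2\leq i\leq n-1$.
   Context: $F_n$ is the set of vectors $\vec{x}=(x_1,\ldots,x_n)\in\mathbb{Z}_2^n$ with no $i$ such that $x_i=x_{i+1}=1$. An $n\times n$ matrix $A$ over $\mathbb{Z}_2$ is $F_n$-good if it is invertible and $A\vec{x}\in F_n$ for all $\vec{x}\in F_n$. $A_i$ denotes the $i$-th row of $A$, $A_{i,j}$ its $(i,j)$ entry, and $\vec{e}_j$ the $j$-th standard basis vector (written as a row). *)

From mathcomp Require Import all_boot all_order all_algebra.
Set Implicit Arguments. Unset Strict Implicit. Unset Printing Implicit Defensive.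
Import GRing.Theory.
Local Open Scope ring_scope.

(* Z_2 is 'F_2. Vectors in Z_2^n are column vectors 'cV['F_2]_n.
   Paper index i (1..n) corresponds to ordinal i-1. *)

Definition in_Fn (n : nat) (x : 'cV['F_2]_n) : Prop :=
  forall i j : 'I_n, val j = (val i).+1 -> ~ (x i 0 = 1 /\ x j 0 = 1).

Definition Fn_good (n : nat) (A : 'M['F_2]_n) : Prop :=
  A \in unitmx /\ forall x : 'cV['F_2]_n, in_Fn x -> in_Fn (A *m x).

Definition std_row (n : nat) (j : 'I_n) : 'rV['F_2]_n := delta_mx 0 j.

From mathcomp Require Import all_boot all_order all_algebra all_fingroup.
From mathcomp Require Import zify.
Import GRing.Theory.
Local Open Scope ring_scope.

(* Testing A on the vectors e_j and e_j + e_k of F_n shows that A_{i,j} = A_{i+1,k} = 1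
   forces the columns j and k to be adjacent.  So once row i-1 has a 1 in column i-1,
   row i is supported in {i-2, i}; a 1 in column i-2 would make some later row repeat an
   earlier one, contradicting invertibility, and induction shows that the middle rows are
   unit vectors.  The case A_{1,n} = 1 reduces to A_{1,1} = 1 by reversing the columns,
   which preserves F_n-goodness. *)

Definition adjacent (j k : nat) : bool := (j == k.+1) || (k == j.+1).

Section SupportRows.

Context {n : nat} {s : nat -> nat -> bool}.

Hypothesis s_adjacent : forall {i j k}, s i j -> s i.+1 k -> adjacent j k.
Hypothesis s_row_nonempty : forall i, (i < n)%N -> exists j, s i j.
Hypothesis s_row_inj : forall i i', (i < n)%N -> (i' < n)%N -> s i =1 s i' -> i = i'.
Hypothesis s00 : s 0 0.

Lemma row_rel_single i c : (i < n)%N -> (forall j, s i j -> j = c) -> s i =1 pred1 c.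
Proof.
move=> lt_i_n sic j /=; have [k sik] := s_row_nonempty _ lt_i_n.
by apply/idP/eqP=> [/sic // | ->]; rewrite -(sic k).
Qed.

Lemma row_rel_diag i : (1 <= i)%N -> (i.+2 <= n)%N -> s i =1 pred1 i.
Proof.
elim/ltn_ind: i => i IH i_gt0 lt_i2_n.
have s_prev : s i.-1 i.-1.
  case: (posnP i.-1) => [-> | ?]; first by rewrite s00.
  by rewrite (IH i.-1) /=; lia.
have s_i : forall j, s i j -> j.+2 = i \/ j = i.
  move=> j sij; have := s_adjacent s_prev; rewrite prednK // => /(_ _ sij).
  rewrite /adjacent; lia.
case: (posnP i.-1) => [i1 | i_gt1].
  apply: row_rel_single; first lia.
  by move=> j /s_i; lia.
have rows_below : forall k, (1 <= k < i)%N -> s k =1 pred1 k.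
  by move=> k /andP[k_gt0 lt_k_i]; apply: IH => //; lia.
apply: row_rel_single; first lia.
move=> c sic; case: (s_i c sic) => [ci | //]; exfalso.
have [s_ii_or_i2 | ] := boolP (s i i || (i == 2)).
  have : s i.+1 =1 s i.-1.
    move=> k; rewrite (rows_below i.-1) /=; last lia.
    apply: (@row_rel_single i.+1 i.-1) => [|l sl]; first lia.
    have := s_adjacent sic sl; case/orP: s_ii_or_i2 => [/s_adjacent/(_ sl) | /eqP];
      rewrite /adjacent; lia.
  by move/s_row_inj; lia.
rewrite negb_or => /andP[/negPf nsii i_neq2].
have : s i =1 s c.
  move=> k; rewrite (rows_below c) /=; last lia.
  apply: row_rel_single => [|l /[dup] sil /s_i [] //]; [lia | lia | move=> li].
  by rewrite li nsii in sil.
by move/s_row_inj; lia.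
Qed.

End SupportRows.

Lemma F2_eq1 (a : 'F_2) : (a == 1) = (a != 0).
Proof. by case: a => [[|[|//]] ?]. Qed.

Lemma F2_neq1 (a : 'F_2) : a != 1 -> a = 0.
Proof. by rewrite F2_eq1 negbK => /eqP. Qed.

Lemma F2_eq1_inj (a b : 'F_2) : (a == 1) = (b == 1) -> a = b.
Proof. by case: (a =P 1) => [-> /esym/eqP | /eqP/F2_neq1 -> /esym/negbT/F2_neq1]. Qed.

Lemma F2_natr_eq1 (b : bool) : ((b%:R : 'F_2) == 1) = b.
Proof. by case: b; rewrite ?eqxx // eq_sym oner_eq0. Qed.

Lemma F2_natrD_eq1 (b c : bool) : (b%:R + c%:R : 'F_2) = 1 -> b || c.
Proof. by case: b; case: c; rewrite ?addr0 // => /eqP; rewrite F2_natr_eq1. Qed.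

Definition mx_support {m n} (B : 'M['F_2]_(m, n)) (i j : nat) : bool :=
  if insub i : option 'I_m is Some i' then
    if insub j : option 'I_n is Some j' then B i' j' == 1 else false
  else false.

Lemma mx_supportE {m n} (B : 'M['F_2]_(m, n)) (i : 'I_m) (j : 'I_n) :
  mx_support B i j = (B i j == 1).
Proof. by rewrite /mx_support !valK. Qed.

Lemma mx_support_ord {m n} (B : 'M['F_2]_(m, n)) i j : mx_support B i j ->
  exists (i' : 'I_m) (j' : 'I_n), [/\ i = i', j = j' & B i' j' = 1].
Proof.
rewrite /mx_support; case: insubP => // i' _ <-; case: insubP => // j' _ <- /eqP.
by exists i', j'.
Qed.

Section GoodMatrix.

Context {n : nat} {A : 'M['F_2]_n} (A_good : Fn_good A).

Lemma in_Fn_delta (j : 'I_n) : in_Fn (delta_mx j 0).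
Proof.
move=> a b ab; rewrite !mxE !andbT => -[/eqP + /eqP]; rewrite !F2_natr_eq1 => /eqP aj /eqP bj.
by move: ab; rewrite aj bj; lia.
Qed.

Lemma in_Fn_delta_add (j k : 'I_n) :
  ~~ adjacent j k -> in_Fn (delta_mx j 0 + delta_mx k 0).
Proof.
move=> jk a b ab; rewrite !mxE !andbT => -[/F2_natrD_eq1 aS /F2_natrD_eq1 bS].
by case/orP: aS bS jk => /eqP aE /orP[] /eqP bE; move: ab; rewrite aE bE /adjacent /=; lia.
Qed.

Lemma Fn_good_col_disjoint {i i' j : 'I_n} :
  val i' = (val i).+1 -> A i j = 1 -> A i' j = 0.
Proof.
move=> ii' Aij; apply/F2_neq1/eqP => Ai'j.
by apply: (A_good.2 _ (in_Fn_delta j) i i' ii'); rewrite -colE !mxE.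
Qed.

Lemma Fn_good_adjacent (i i' j k : 'I_n) :
  val i' = (val i).+1 -> A i j = 1 -> A i' k = 1 -> adjacent j k.
Proof.
move=> ii' Aij Ai'k; apply/negPn/negP => /in_Fn_delta_add/A_good.2/(_ i i' ii'); apply.
have Aik : A i k = 0.
  by apply/F2_neq1; apply: contra_eqN Ai'k => /eqP/(Fn_good_col_disjoint ii')->.
by rewrite mulmxDr -!colE !mxE Aij Ai'k Aik (Fn_good_col_disjoint ii' Aij) addr0 add0r.
Qed.

Let A_row_free : row_free A.
Proof. by rewrite row_free_unit; case: A_good. Qed.

Lemma Fn_good_row_neq0 (i : 'I_n) : row i A != 0.
Proof.
rewrite rowE mulmx_free_eq0 //; apply/eqP => /matrixP/(_ 0 i).
by rewrite !mxE !eqxx => /eqP; rewrite oner_eq0.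
Qed.

Lemma Fn_good_row_inj : injective (fun i : 'I_n => row i A).
Proof.
move=> i i'; rewrite /= !rowE => /(row_free_inj A_row_free)/matrixP/(_ 0 i).
by rewrite !mxE !eqxx /=; case: eqP => // _ /eqP; rewrite oner_eq0.
Qed.

Lemma mx_support_adjacent i j k :
  mx_support A i j -> mx_support A i.+1 k -> adjacent j k.
Proof.
move=> /mx_support_ord[i1 [j1 [-> -> A1]]] /mx_support_ord[i2 [k1 [i12 -> A2]]].
exact: Fn_good_adjacent (esym i12) A1 A2.
Qed.

Lemma mx_support_row_nonempty i : (i < n)%N -> exists j, mx_support A i j.
Proof.
move=> lt_i_n; set i' := Ordinal lt_i_n.
have /existsP[j Aij] : [exists j, A i' j != 0].
  apply: contraR (Fn_good_row_neq0 i') => /existsPn A0.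
  by apply/eqP/rowP => j; rewrite !mxE; apply/eqP/negbNE/A0.
by exists j; rewrite (mx_supportE _ i') F2_eq1.
Qed.

Lemma mx_support_row_inj i i' : (i < n)%N -> (i' < n)%N ->
  mx_support A i =1 mx_support A i' -> i = i'.
Proof.
move=> lt_i_n lt_i'_n Ai_Ai'.
suff /(congr1 val) : Ordinal lt_i_n = Ordinal lt_i'_n by [].
apply: Fn_good_row_inj; apply/rowP => j; rewrite !mxE; apply: F2_eq1_inj.
by rewrite -(mx_supportE _ (Ordinal lt_i_n)) -(mx_supportE _ (Ordinal lt_i'_n)) Ai_Ai'.
Qed.

Lemma Fn_good_row_diag (i0 i : 'I_n) : val i0 = 0%N -> A i0 i0 = 1 ->
  (1 <= i)%N -> (i <= n - 2)%N -> row i A = delta_mx 0 i.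
Proof.
move=> i00 Ai0 i_gt0 i_le; apply/rowP => j; rewrite !mxE eqxx /=.
have s00 : mx_support A 0 0 by rewrite -i00 mx_supportE Ai0.
have lt_i2_n : (i.+2 <= n)%N by have := ltn_ord i; lia.
have := row_rel_diag mx_support_adjacent mx_support_row_nonempty
  mx_support_row_inj s00 i i_gt0 lt_i2_n j.
by rewrite mx_supportE /= => Aij; apply: F2_eq1_inj; rewrite Aij F2_natr_eq1.
Qed.

End GoodMatrix.

Definition rev_perm n : 'S_n := perm (@rev_ord_inj n).

Lemma rev_permV n : ((rev_perm n)^-1)%g = rev_perm n.
Proof.
by apply/permP => i; apply: (@perm_inj _ (rev_perm n)); rewrite permKV !permE rev_ordK.
Qed.

Lemma in_Fn_row_perm_rev {n} (x : 'cV['F_2]_n) : in_Fn x -> in_Fn (row_perm (rev_perm n) x).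
Proof.
move=> Fx a b ab; rewrite !mxE !permE => -[xa xb].
by apply: (Fx (rev_ord b) (rev_ord a)) => //=; move: ab (ltn_ord b) => /=; lia.
Qed.

Lemma Fn_good_col_perm_rev {n} {A : 'M['F_2]_n} :
  Fn_good A -> Fn_good (col_perm (rev_perm n) A).
Proof.
case=> A_unit A_Fn; split; first by rewrite col_permE unitmx_mul unitmx_perm andbT.
by move=> x /in_Fn_row_perm_rev Fx; rewrite mul_col_perm rev_permV; apply: A_Fn.
Qed.

Theorem corollary2 (n : nat) (A : 'M['F_2]_n) :
  Fn_good A ->
  (forall first : 'I_n, val first = 0%N ->
     (A first first = 1 ->
        forall i : 'I_n, (1 <= val i)%N -> (val i <= n - 2)%N ->
          row i A = std_row i)
  /\ (forall last : 'I_n, val last = (n - 1)%N ->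
        A first last = 1 ->
        forall i j : 'I_n, (1 <= val i)%N -> (val i <= n - 2)%N ->
          val j = (n - 1 - val i)%N ->
          row i A = std_row j)).
Proof.
move=> A_good first first0; split.
  by move=> A00 i; exact: Fn_good_row_diag A_good first i first0 A00.
move=> last last_n1 A_first_last i j i_gt0 i_le j_def.
have A'_good := Fn_good_col_perm_rev A_good.
have A'00 : col_perm (rev_perm n) A first first = 1.
  rewrite mxE permE (_ : rev_ord first = last) //.
  by apply: val_inj; rewrite /= first0 last_n1 subn1.
have /rowP row_i := Fn_good_row_diag A'_good first i first0 A'00 i_gt0 i_le.
apply/rowP => k; have := row_i (rev_ord k); rewrite !mxE permE rev_ordK => ->.
congr ((_ && _)%:R); apply/eqP/eqP => /(congr1 val) E; apply: val_inj;
  move: E j_def (ltn_ord i) (ltn_ord k) => /=; lia.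
Qed.
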